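(* Let $a,b,c$ be nonzero constants, $N\ge1$, and $p_i,q_j$ ($1\le i,j\le N$) nonzero constants with $p_i+q_j\neq0$, and $c_{ij}$ arbitrary constants. For integers $n,k,l,m$ let $$\tau_n(k,l,m)=\det\Big(c_{ij}+\frac{1}{p_i+q_j}\Big(-\frac{p_i}{q_j}\Big)^{n}\Big(\frac{1-ap_i}{1+aq_j}\Big)^{-k}\Big(\frac{1-bp_i^{-1}}{1+bq_j^{-1}}\Big)^{-l}\Big(\frac{1-cp_i}{1+cq_j}\Big)^{m}\Big)_{1\le i,j\le N},$$ or alternatively the Casorati determinant $\tau_n(k,l,m)=\det(\phi^{(i)}_{n+j-1}(k,l,m))_{1\le i,j\le N}$ with $$\phi^{(i)}_n(k,l,m)=c_ip_i^n(1-ap_i)^{-k}(1-bp_i^{-1})^{-l}(1-cp_i)^m+d_iq_i^n(1-aq_i)^{-k}(1-bq_i^{-1})^{-l}(1-cq_i)^m$$ ($c_i,d_i$ arbitrary constants). Then $\tau_n(k,l,m)$ satisfies $$\tau_n(k,l+1,m)\tau_n(k,l,m-1)-bc\,\tau_{n+1}(k,l,m-1)\tau_{n-1}(k,l+1,m)=(1-bc)\tau_n(k,l,m)\tau_n(k,l+1,m-1),$$ $$\tau_{n+1}(k,l,m-1)\tau_n(k+1,l,m)-ac^{-1}\tau_{n+1}(k+1,l,m)\tau_n(k,l,m-1)=(1-ac^{-1})\tau_n(k,l,m)\tau_{n+1}(k+1,l,m-1).$$ *)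

From HB Require Import structures.
From mathcomp Require Import all_boot all_order all_algebra.
Set Implicit Arguments. Unset Strict Implicit. Unset Printing Implicit Defensive.
Import Order.TTheory GRing.Theory Num.Theory.
Local Open Scope ring_scope.

Definition tau_gram (R : fieldType) (N : nat) (a b c : R) (p q : 'I_N -> R)
  (C : 'I_N -> 'I_N -> R) (n k l m : int) : R :=
  \det (\matrix_(i < N, j < N)
     (C i j + (p i + q j)^-1 * (- (p i / q j)) ^ n
        * ((1 - a * p i) / (1 + a * q j)) ^ (- k)
        * ((1 - b / p i) / (1 + b / q j)) ^ (- l)
        * ((1 - c * p i) / (1 + c * q j)) ^ m)).

Definition phi_cas (R : fieldType) (N : nat) (a b c : R) (p q cc dd : 'I_N -> R)
  (i : 'I_N) (n k l m : int) : R :=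
  cc i * p i ^ n * (1 - a * p i) ^ (- k) * (1 - b / p i) ^ (- l) * (1 - c * p i) ^ m
  + dd i * q i ^ n * (1 - a * q i) ^ (- k) * (1 - b / q i) ^ (- l) * (1 - c * q i) ^ m.

(* Casorati-type tau function: det(phi^{(i)}_{n+j-1}), 1<=i,j<=N, i.e. with
   0-based j the column index is n + j. *)
Definition tau_cas (R : fieldType) (N : nat) (a b c : R) (p q cc dd : 'I_N -> R)
  (n k l m : int) : R :=
  \det (\matrix_(i < N, j < N) phi_cas a b c p q cc dd i (n + (j : nat)%:Z) k l m).

Definition satisfies_bilinear (R : fieldType) (a b c : R)
  (tau : int -> int -> int -> int -> R) : Prop :=
  forall n k l m : int,
    tau n k (l + 1) m * tau n k l (m - 1)
      - b * c * tau (n + 1) k l (m - 1) * tau (n - 1) k (l + 1) m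
    = (1 - b * c) * tau n k l m * tau n k (l + 1) (m - 1)
  /\
    tau (n + 1) k l (m - 1) * tau n (k + 1) l m
      - a / c * tau (n + 1) (k + 1) l m * tau n k l (m - 1)
    = (1 - a / c) * tau n k l m * tau (n + 1) (k + 1) l (m - 1).

(* The four shifts act on a single entry by simple factors: for the Gram
   form, the (i, j) kernel gets multiplied by -(p_i / q_j) or by a ratio
   (1 + al q_j) / (1 - al p_i), so each shifted Gram matrix is a rank-one
   perturbation of the unshifted one; for the Casorati form, each shift
   replaces the sequence phi_n by phi_n - al phi_(n+1).  In both cases the two
   bilinear equations are the Desnanot-Jacobi identity for a determinant
   bordered by two rows and two columns: the rank-one data for the Gram form,
   and for the Casorati form the extreme columns together with the geometric
   rows al^(N+1-t), be^(N+1-t), which right multiplication by the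
   unitriangular matrices 1 - al S turns into the shifted windows. *)

From HB Require Import structures.
From mathcomp Require Import all_boot all_order all_algebra.
From mathcomp Require Import perm ring zify.
Set Implicit Arguments. Unset Strict Implicit. Unset Printing Implicit Defensive.
Import Order.TTheory GRing.Theory Num.Theory.
Local Open Scope ring_scope.

Section BlockDeterminants.
Variable R : comNzRingType.

Lemma det_mx2 (A : 'M[R]_2) : \det A = A 0 0 * A 1 1 - A 0 1 * A 1 0.
Proof.
rewrite (expand_det_row _ 0) !big_ord_recl big_ord0 /cofactor !det_mx11 !mxE /=.
have -> : lift 0 0 = 1 :> 'I_2 by apply/val_inj.
have -> : lift 1 0 = 0 :> 'I_2 by apply/val_inj.
by rewrite /bump /= expr0 expr1 mul1r addr0 mulN1r mulrN.
Qed.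

(* Multiply on the right by [[adj M, -adj M U]; [0, det M]]. *)
Lemma det_block_adj n k (M : 'M[R]_n) (U : 'M_(n, k)) (V : 'M_(k, n)) (E : 'M_k) :
  \det M ^+ (n + k) * \det (block_mx M U V E) =
  \det M ^+ n.+1 * \det (\det M *: E - V *m \adj M *m U).
Proof.
set d := \det M.
set Q := block_mx (\adj M) (- (\adj M *m U)) 0 (d%:M : 'M_k).
have detQ : d * \det Q = d ^+ n * d ^+ k.
  have {1}-> : d = \det (block_mx M 0 0 (1%:M : 'M_k)) by rewrite det_ublock det1 mulr1.
  rewrite -det_mulmx mulmx_block !mul0mx !mulmx0 !mul1mx !addr0 !add0r.
  by rewrite mul_mx_adj mulmxN mulmxA mul_mx_adj mul_scalar_mx det_ublock !det_scalar.
have detMQ : \det (block_mx M U V E) * \det Q = d ^+ n * \det (d *: E - V *m \adj M *m U).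
  rewrite -det_mulmx mulmx_block !mulmx0 !addr0 mul_mx_adj mulmxN mulmxA mul_mx_adj.
  rewrite mul_scalar_mx !mul_mx_scalar addNr mulmxN mulmxA [_ + _ *: E]addrC.
  by rewrite det_lblock det_scalar.
by rewrite exprD -detQ -mulrA (mulrC (\det Q)) detMQ exprS mulrA.
Qed.

Lemma det_block_schur n k (M : 'M[R]_n) (U : 'M_(n, k)) (V : 'M_(k, n)) E K :
  K *m E = 1%:M -> \det (block_mx M U V E) = \det (M - U *m K *m V) * \det E.
Proof.
move=> KE.
have -> : block_mx M U V E =
    block_mx 1%:M (U *m K) 0 1%:M *m block_mx (M - U *m K *m V) 0 V E.
  rewrite mulmx_block !mul1mx !mul0mx !add0r -[U *m K *m E]mulmxA KE mulmx1.
  by rewrite subrK.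
by rewrite det_mulmx det_ublock !det1 !mul1r det_lblock.
Qed.

End BlockDeterminants.

Definition border_det (R : comNzRingType) n (M : 'M[R]_n) (U : 'M_(n, 2))
    (V : 'M_(2, n)) (E : 'M_2) (i j : 'I_2) :=
  \det (block_mx M (col j U) (row i V) ((E i j)%:M : 'M_1)).

Section JacobiIdentity.
Variable R : idomainType.

Lemma border_detE n (M : 'M[R]_n) U V E i j : \det M != 0 ->
  border_det M U V E i j = \det M * E i j - (V *m \adj M *m U) i j.
Proof.
move=> detM0; have := det_block_adj M (col j U) (row i V) ((E i j)%:M).
rewrite /border_det -{1}[n.+1]addn1 det_mx11 !mxE eqxx mulr1n => /(mulfI (expf_neq0 _ detM0)) ->.
by congr (_ - _); apply: eq_bigr => k _; rewrite -row_mul !mxE.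
Qed.

Lemma border_det_jacobi_nz n (M : 'M[R]_n) U V E : \det M != 0 ->
  \det M * \det (block_mx M U V E) =
  border_det M U V E 0 0 * border_det M U V E 1 1
  - border_det M U V E 0 1 * border_det M U V E 1 0.
Proof.
move=> detM0; apply: (mulfI (expf_neq0 n.+1 detM0)).
rewrite mulrA -exprSr -{1}[n.+2]addn2 det_block_adj.
by rewrite det_mx2 !border_detE // !mxE.
Qed.

End JacobiIdentity.

(* Desnanot-Jacobi identity for a matrix bordered by two rows and two columns;
   the case det M = 0 follows from the generic matrix M + X over R[X]. *)
Lemma border_det_jacobi (R : idomainType) n (M : 'M[R]_n) U V E :
  \det M * \det (block_mx M U V E) =
  border_det M U V E 0 0 * border_det M U V E 1 1
  - border_det M U V E 0 1 * border_det M U V E 1 0.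
Proof.
pose MX := char_poly_mx (- M).
have detMX0 : \det MX != 0 by apply/monic_neq0/char_poly_monic.
have eval0C m k (A : 'M[R]_(m, k)) : map_mx (horner_eval 0) (map_mx polyC A) = A.
  by apply/matrixP => i j; rewrite !mxE /= horner_evalE hornerC.
have eval0MX : map_mx (horner_eval 0) MX = M.
  apply/matrixP => i j; rewrite !mxE /= horner_evalE !hornerE.
  by case: (i == j); rewrite /= ?hornerE /= ?opprK ?sub0r ?oppr0.
have := border_det_jacobi_nz (map_mx polyC U) (map_mx polyC V) (map_mx polyC E) detMX0.
move/(congr1 (horner_eval 0)).
rewrite rmorphB !rmorphM /= /border_det -!det_map_mx !map_block_mx !map_col !map_row.
by rewrite !map_scalar_mx eval0MX !eval0C !mxE /= !horner_evalE !hornerC.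
Qed.

Lemma border_det_schur (R : fieldType) n (M : 'M[R]_n) U V (E : 'M_2) i j :
  E i j != 0 ->
  border_det M U V E i j =
  \det (M - col j U *m (E i j)^-1%:M *m row i V) * E i j.
Proof.
move=> Eij0; rewrite /border_det (@det_block_schur _ n 1 _ _ _ _ ((E i j)^-1%:M)).
  by rewrite det_mx11 mxE eqxx mulr1n.
by rewrite mul_scalar_mx scale_scalar_mx mulVf.
Qed.

Definition mx2 (R : Type) (a b c d : R) : 'M[R]_2 :=
  \matrix_(i < 2, j < 2)
    if i == 0 :> nat then (if j == 0 :> nat then a else b)
    else (if j == 0 :> nat then c else d).

Definition gram_mx (R : fieldType) N (x y ph ps : 'I_N -> R) (C : 'I_N -> 'I_N -> R)
    (f : R -> R -> R) : 'M[R]_N :=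
  \matrix_(i, j) (C i j + (x i + y j)^-1 * (ph i * ps j * f (x i) (y j))).

Definition gram_dress (R : fieldType) (al be : R) (e1 e2 e3 : nat) (P Q : R) : R :=
  (- (P / Q)) ^+ e1 * ((1 + al * Q) / (1 - al * P)) ^+ e2
  * ((1 + be * Q) / (1 - be * P)) ^+ e3.

Section GramBilinear.
Variables (R : fieldType) (N : nat) (x y ph ps : 'I_N -> R) (C : 'I_N -> 'I_N -> R).
Variables (al be : R).
Hypotheses (al0 : al != 0) (be0 : be != 0) (xy0 : forall i j, x i + y j != 0)
  (y0 : forall j, y j != 0) (alx0 : forall i, 1 - al * x i != 0)
  (bex0 : forall i, 1 - be * x i != 0).

Local Notation G e1 e2 e3 := (gram_mx x y ph ps C (gram_dress al be e1 e2 e3)).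

Ltac nz := rewrite /= ?bex0 ?alx0 ?y0 ?xy0 ?al0 ?be0 ?oppr_eq0 ?oner_eq0 ?invr_eq0
  ?mulf_neq0 ?andbT //.

(* Every dressed Gram matrix is a rank-one perturbation of G 0 0 0, because
   (gram_dress P Q - 1) / (P + Q) splits as a product u(P) v(Q); the bordering
   vectors U, V and corner E below collect these factors. *)
Let M := G 0 0 0.
Let U : 'M_(N, 2) :=
  \matrix_(i, j) (ph i / (1 - (if j == 0 :> nat then be else al) * x i)).
Let V : 'M_(2, N) :=
  \matrix_(i, j) (- (ps j * (if i == 0 :> nat then (y j)^-1 else 1))).
Let E := mx2 (-1) (-1) be^-1 al^-1.

Let rank_one_entry i j (e : R) k l :
  (col j U *m e%:M *m row i V) k l = U k j * e * V i l.
Proof. by rewrite !mxE big_ord1 !mxE big_ord1 !mxE eqxx mulr1n. Qed.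

Let border00 : border_det M U V E 0 0 = - \det (G 1 0 1).
Proof.
rewrite border_det_schur ?mxE /= ?oppr_eq0 ?oner_eq0 // mulrN1.
congr (- \det _); apply/matrixP => i j; rewrite mxE [X in _ + X]mxE rank_one_entry !mxE /=.
by rewrite /gram_dress; field; nz.
Qed.

Let border11 : border_det M U V E 1 1 = \det (G 0 1 0) / al.
Proof.
rewrite border_det_schur ?mxE /= ?invr_eq0 //.
congr (\det _ * _); apply/matrixP => i j; rewrite mxE [X in _ + X]mxE rank_one_entry !mxE /=.
by rewrite /gram_dress; field; nz.
Qed.

Let border01 : border_det M U V E 0 1 = - \det (G 1 1 0).
Proof.
rewrite border_det_schur ?mxE /= ?oppr_eq0 ?oner_eq0 // mulrN1.
congr (- \det _); apply/matrixP => i j; rewrite mxE [X in _ + X]mxE rank_one_entry !mxE /=.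
by rewrite /gram_dress; field; nz.
Qed.

Let border10 : border_det M U V E 1 0 = \det (G 0 0 1) / be.
Proof.
rewrite border_det_schur ?mxE /= ?invr_eq0 //.
congr (\det _ * _); apply/matrixP => i j; rewrite mxE [X in _ + X]mxE rank_one_entry !mxE /=.
by rewrite /gram_dress; field; nz.
Qed.

(* Factor the bordering through P = [[be - al, 0]; [1, 1]] so that the new
   corner E' is invertible and the Schur complement is G 1 1 1. *)
Let det_bordered : \det (block_mx M U V E) = \det (G 1 1 1) * (- (al * be)^-1) * (be - al).
Proof.
pose P := mx2 (be - al) 0 1 1.
pose U' : 'M_(N, 2) := \matrix_(i, j)
  (if j == 0 :> nat then ph i * x i / ((1 - al * x i) * (1 - be * x i))
   else ph i / (1 - al * x i)).
pose E' := mx2 0 (-1) (- (al * be)^-1) al^-1.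
pose K' := mx2 (- be) (- (al * be)) (-1) 0.
have UE : U = U' *m P.
  apply/matrixP => i j; rewrite !mxE !big_ord_recl big_ord0 !mxE /=.
  by case: j => [[|[|j]] Hj] //=; field; nz.
have EE : E = E' *m P.
  apply/matrixP => i j; rewrite !mxE !big_ord_recl big_ord0 !mxE /=.
  by case: i => [[|[|i]] Hi]; case: j => [[|[|j]] Hj] //=; field; nz.
have KE : K' *m E' = 1%:M.
  apply/matrixP => i j; rewrite !mxE !big_ord_recl big_ord0 !mxE /=.
  by case: i => [[|[|i]] Hi]; case: j => [[|[|j]] Hj] //=; field; nz.
have schurE : M - U' *m K' *m V = G 1 1 1.
  apply/matrixP => i j; rewrite [LHS]mxE !mxE !big_ord_recl !big_ord0 !mxE.
  rewrite !big_ord_recl !big_ord0 !mxE /=.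
  by rewrite /gram_dress; field; nz.
have -> : block_mx M U V E = block_mx M U' V E' *m block_mx 1%:M 0 0 P.
  by rewrite mulmx_block !mulmx0 !addr0 !mulmx1 !add0r UE EE.
rewrite det_mulmx det_ublock det1 mul1r (det_block_schur _ _ _ KE) schurE.
by rewrite !det_mx2 !mxE /=; ring.
Qed.

Lemma gram_bilinear :
  \det (G 1 0 1) * \det (G 0 1 0) - al / be * \det (G 1 1 0) * \det (G 0 0 1)
  = (1 - al / be) * \det (G 0 0 0) * \det (G 1 1 1).
Proof.
transitivity (- al * (\det M * \det (block_mx M U V E))).
  by rewrite border_det_jacobi border00 border11 border01 border10; field; nz.
by rewrite det_bordered /M; field; nz.
Qed.

End GramBilinear.

Section NatIndexedMatrices.
Variable R : comNzRingType.

Definition natmx m n (h : nat -> nat -> R) : 'M[R]_(m, n) := \matrix_(i, j) h i j.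

Lemma eq_natmx m n (h h' : nat -> nat -> R) :
  (forall i j, (i < m)%N -> (j < n)%N -> h i j = h' i j) -> natmx m n h = natmx m n h'.
Proof. by move=> hh'; apply/matrixP => i j; rewrite !mxE hh'. Qed.

Lemma natmx_eq0 m n (h : nat -> nat -> R) :
  (forall i j, (i < m)%N -> (j < n)%N -> h i j = 0) -> natmx m n h = 0.
Proof. by move=> h0; apply/matrixP => i j; rewrite !mxE h0. Qed.

Lemma col_natmx m n (h : nat -> nat -> R) j :
  col j (natmx m n h) = natmx m 1 (fun i _ => h i j).
Proof. by apply/matrixP => i k; rewrite !mxE. Qed.

Lemma row_natmx m n (h : nat -> nat -> R) i :
  row i (natmx m n h) = natmx 1 n (fun _ j => h i j).
Proof. by apply/matrixP => k j; rewrite !mxE. Qed.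

Lemma scalar_natmx (c : R) : (c%:M : 'M_1) = natmx 1 1 (fun _ _ => c).
Proof. by apply/matrixP => i j; rewrite !mxE !ord1 eqxx mulr1n. Qed.

Lemma natmx_block n k (h11 : nat -> nat -> R) h12 h21 h22 :
  block_mx (natmx n n h11) (natmx n k h12) (natmx k n h21) (natmx k k h22) =
  natmx (n + k) (n + k) (fun i j =>
    if (i < n)%N then (if (j < n)%N then h11 i j else h12 i (j - n)%N)
    else (if (j < n)%N then h21 (i - n)%N j else h22 (i - n)%N (j - n)%N)).
Proof.
apply/matrixP => i j; rewrite [RHS]mxE.
case: (split_ordP i) => i' ->; case: (split_ordP j) => j' ->;
  rewrite ?block_mxEul ?block_mxEur ?block_mxEdl ?block_mxEdr !mxE /= ?ltn_ord //=;
  by rewrite ?ltnNge ?leq_addr /= ?addKn.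
Qed.

Lemma natmx_split n k (h : nat -> nat -> R) :
  natmx (n + k) (n + k) h =
  block_mx (natmx n n h) (natmx n k (fun i j => h i (n + j)%N))
           (natmx k n (fun i j => h (n + i)%N j)) (natmx k k (fun i j => h (n + i)%N (n + j)%N)).
Proof.
rewrite natmx_block; apply: eq_natmx => i j _ _.
by case: (ltnP i n) => ?; case: (ltnP j n) => ?; rewrite ?subnKC.
Qed.

Lemma sum_mul_nat_eq n (F : nat -> R) c :
  \sum_(k < n) F k * (k == c :> nat)%:R = if (c < n)%N then F c else 0.
Proof.
elim: n => [|n IHn]; first by rewrite big_ord0.
rewrite big_ord_recr /= IHn.
case: (ltngtP c n) => [lt_cn|lt_nc|->].
- by rewrite ltnS (ltnW lt_cn) mulr0 addr0.
- by rewrite ltnS leqNgt lt_nc /= mulr0 addr0.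
- by rewrite ltnSn mulr1 add0r.
Qed.

Definition shift_mx n : 'M[R]_n := natmx n n (fun k j => (k == j.+1)%:R).

Lemma mulmx_shift m n (h : nat -> nat -> R) :
  natmx m n h *m shift_mx n = natmx m n (fun i j => if (j.+1 < n)%N then h i j.+1 else 0).
Proof.
apply/matrixP => i j; rewrite !mxE -(sum_mul_nat_eq n (h i)).
by apply: eq_bigr => k _; rewrite !mxE.
Qed.

Lemma det_unitrig n (T : 'M[R]_n) :
  (forall i j : 'I_n, (i < j)%N -> T i j = 0) -> (forall i, T i i = 1) -> \det T = 1.
Proof.
move=> T0 T1; rewrite det_trig; last by apply/is_trig_mxP.
by rewrite big1 // => i _; rewrite T1.
Qed.

Lemma det_shift_poly2 n (c d : R) :
  \det (1%:M - c *: shift_mx n + d *: (shift_mx n *m shift_mx n)) = 1.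
Proof.
rewrite /shift_mx mulmx_shift; apply: det_unitrig => [i j lt_ij|i]; rewrite !mxE.
- have /negbTE -> : i != j by rewrite neq_ltn lt_ij.
  rewrite (ltn_eqF (ltn_trans lt_ij (ltnSn j))).
  rewrite (ltn_eqF (ltn_trans lt_ij (ltn_trans (ltnSn j) (ltnSn j.+1)))).
  by case: ifP => _; rewrite /= ?mulr0n ?mulr0 ?subr0 ?addr0.
- rewrite eqxx (ltn_eqF (ltnSn i)) (ltn_eqF (ltn_trans (ltnSn i) (ltnSn i.+1))).
  by case: ifP => _; rewrite /= ?mulr0n ?mulr1n ?mulr0 ?subr0 ?addr0.
Qed.

Definition rot_idx n j := if (j < n)%N then j.+1 else if j == n then 0%N else j.

Lemma det_natmx_rot k n (h : nat -> nat -> R) : (n < k)%N ->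
  \det (natmx k k (fun i j => h i (rot_idx n j))) = (-1) ^+ n * \det (natmx k k h).
Proof.
case: k => [//|k] lt_nk.
pose s := lift_perm (Ordinal lt_nk) (Ordinal (leq_ltn_trans (leq0n n) lt_nk)) 1.
have sE (j : 'I_k.+1) : val (s j) = rot_idx n j.
  case: (unliftP (Ordinal lt_nk) j) => [j' ->|->].
  - rewrite lift_perm_lift perm1 /= /rot_idx /bump /=.
    case: (leqP n j') => le_nj; rewrite /= ?add1n ?add0n.
    + by rewrite ltnNge (leq_trans le_nj (leqnSn j')) /= gtn_eqF.
    + by rewrite le_nj.
  - by rewrite lift_perm_id /= /rot_idx ltnn eqxx.
have -> : natmx k.+1 k.+1 (fun i j => h i (rot_idx n j)) = col_perm s (natmx k.+1 k.+1 h).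
  by apply/matrixP => i j; rewrite !mxE sE.
rewrite col_permE det_mulmx det_perm odd_permV odd_lift_perm odd_perm1 /=.
by rewrite addbF addbF signr_odd mulrC.
Qed.

End NatIndexedMatrices.

Definition sdiff (R : pzRingType) (c : R) (g : nat -> nat -> R) i t :=
  g i t - c * g i t.+1.

Definition window_det (R : comNzRingType) N s (g : nat -> nat -> R) :=
  \det (natmx N N (fun i t => g i (s + t)%N)).

Lemma eq_window_det (R : comNzRingType) N s (g g' : nat -> nat -> R) :
  (forall i t, g i t = g' i t) -> window_det N s g = window_det N s g'.
Proof. by move=> gg'; congr (\det _); apply: eq_natmx => i t _ _; rewrite gg'. Qed.

Lemma window_detZ (R : comNzRingType) N s (x : R) (g : nat -> nat -> R) :
  window_det N s (fun i t => x * g i t) = x ^+ N * window_det N s g.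
Proof. by rewrite /window_det -detZ; congr (\det _); apply/matrixP => i j; rewrite !mxE. Qed.

Section GeometricRows.
Variables (R : comNzRingType) (N : nat).

(* Right multiplication by 1 - c S (S = shift_mx) subtracts from each column
   c times the next one, which clears the geometric row up to its last entry. *)
Lemma det_geometric_row (f : nat -> nat -> R) (c : R) (e : nat) : (N <= e)%N ->
  \det (natmx (N + 1) (N + 1) (fun i t => if (i < N)%N then f i t else c ^+ (e - t))) =
  c ^+ (e - N) * \det (natmx N N (sdiff c f)).
Proof.
move=> le_Ne; rewrite -[LHS]mulr1 -(det_shift_poly2 (N + 1) c 0) scale0r addr0.
rewrite -det_mulmx mulmxBr mulmx1 -scalemxAr mulmx_shift.
have -> : natmx (N + 1) (N + 1) (fun i t => if (i < N)%N then f i t else c ^+ (e - t)) -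
    c *: natmx (N + 1) (N + 1) (fun i j => if (j.+1 < N + 1)%N then
            (if (i < N)%N then f i j.+1 else c ^+ (e - j.+1)) else 0)
  = block_mx (natmx N N (sdiff c f)) (natmx N 1 (fun i _ => f i N))
             (natmx 1 N (fun _ _ => 0)) (natmx 1 1 (fun _ _ => c ^+ (e - N))).
  rewrite natmx_block; apply/matrixP => i j; rewrite !mxE /sdiff.
  have ltS1 k : (k.+1 < N + 1)%N = (k < N)%N by rewrite addn1 ltnS.
  have le_jN : (j <= N)%N by rewrite -ltnS -(addn1 N).
  rewrite !ltS1.
  case: (ltnP i N) => lt_iN; case: (ltnP j N) => ge_jN //.
  - by rewrite [j : nat](@anti_leq j N) ?le_jN // mulr0 subr0.
  - by rewrite -(@subnSK j e) ?(leq_trans ge_jN le_Ne) // exprS subrr.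
  - by rewrite [j : nat](@anti_leq j N) ?le_jN // mulr0 subr0.
by rewrite [natmx 1 N _]natmx_eq0 // det_ublock det_mx11 mxE mulrC.
Qed.

(* Right multiplication by (1 - a S)(1 - b S) = 1 - (a + b) S + a b S^2
   kills both geometric rows except in the last two columns. *)
Lemma det_geometric_rows (f : nat -> nat -> R) (a b : R) :
  \det (natmx (N + 2) (N + 2) (fun i t =>
     if (i < N)%N then f i t else if i == N then a ^+ (N.+1 - t) else b ^+ (N.+1 - t))) =
  (a - b) * \det (natmx N N (sdiff b (sdiff a f))).
Proof.
rewrite -[LHS]mulr1 -(det_shift_poly2 (N + 2) (a + b) (a * b)) -det_mulmx.
rewrite mulmxDr mulmxBr mulmx1 -!scalemxAr mulmxA !mulmx_shift.
have -> : forall m n (h1 h2 h3 : nat -> nat -> R) c d,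
    natmx m n h1 - c *: natmx m n h2 + d *: natmx m n h3 =
    natmx m n (fun i j => h1 i j - c * h2 i j + d * h3 i j).
  by move=> m n h1 h2 h3 c d; apply/matrixP => i j; rewrite !mxE.
rewrite natmx_split [X in block_mx _ _ X _]natmx_eq0; last first.
  move=> i j _ lt_jN; rewrite ltnNge leq_addr /=.
  have -> : (j.+1 < N + 2)%N by lia.
  have -> : (j.+2 < N + 2)%N by lia.
  have -> : (N.+1 - j)%N = (N.+1 - j.+2).+2 by lia.
  have -> : (N.+1 - j.+1)%N = (N.+1 - j.+2).+1 by lia.
  by case: ifP => _; rewrite !exprS; ring.
rewrite det_ublock mulrC; congr (_ * _).
  rewrite det_mx2 !mxE /= (_ : 1 %% 2 = 1)%N // addn0 addn1.
  have -> : (N.+1 < N + 2)%N = true by lia.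
  have -> : (N.+2 < N + 2)%N = false by lia.
  have -> : (N.+1 < N)%N = false by lia.
  have -> : (N.+1 == N) = false by lia.
  by rewrite ltnn eqxx subnn subSnn expr0 expr1; ring.
congr (\det _); apply: eq_natmx => i j lt_iN lt_jN; rewrite lt_iN /sdiff.
have -> : (j.+1 < N + 2)%N by lia.
have -> : (j.+2 < N + 2)%N by lia.
ring.
Qed.

End GeometricRows.

Section CasoratiBilinear.
Variables (R : idomainType) (N : nat) (g : nat -> nat -> R).

Definition casorati_window (r : nat -> R) s :=
  natmx (N + 1) (N + 1) (fun i t => if (i < N)%N then g i (s + t)%N else r (s + t)%N).

Definition bordered_casorati (r1 r2 : nat -> R) :=
  natmx (N + 2) (N + 2) (fun i t => if (i < N)%N then g i t else if i == N then r1 t else r2 t).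

(* Border the inner matrix (columns 1..N) by columns 0 and N+1 and by the
   rows r1, r2; moving column 0 back to the front costs the sign (-1)^N. *)
Lemma casorati_jacobi r1 r2 :
  window_det N 1 g * \det (bordered_casorati r1 r2) =
  \det (casorati_window r2 1) * \det (casorati_window r1 0)
  - \det (casorati_window r2 0) * \det (casorati_window r1 1).
Proof.
pose r i := if i == 0%N then r1 else r2.
pose M := natmx N N (fun i t => g i (1 + t)%N).
pose U := natmx N 2 (fun i j => g i (if j == 0%N then 0%N else N.+1)).
pose V := natmx 2 N (fun i j => r i j.+1).
pose E := natmx 2 2 (fun i j => r i (if j == 0%N then 0%N else N.+1)).
have eqN1 t : (N <= t)%N -> (t < N + 1)%N -> t = N by lia.
have eqN2 t : (N <= t)%N -> (t < N + 2)%N -> t = N \/ t = N.+1 by lia.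
have col1 (i : 'I_2) : border_det M U V E i 1 = \det (casorati_window (r i) 1).
  rewrite /border_det col_natmx row_natmx scalar_natmx natmx_block.
  congr (\det _); apply: eq_natmx => k t _ lt_t.
  case: (ltnP k N) => _; case: (ltnP t N) => ge_t //=.
  - by rewrite (eqN1 t ge_t lt_t) add1n.
  - by rewrite (eqN1 t ge_t lt_t) mxE.
have col0 (i : 'I_2) : border_det M U V E i 0 = (-1) ^+ N * \det (casorati_window (r i) 0).
  rewrite /border_det col_natmx row_natmx scalar_natmx natmx_block.
  rewrite -det_natmx_rot; last by rewrite addn1.
  congr (\det _); apply: eq_natmx => k t _ lt_t; rewrite /rot_idx.
  by case: (ltnP k N) => _; case: (ltnP t N) => ge_t //=;
    rewrite ?(eqN1 t ge_t lt_t) ?eqxx ?mxE.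
have bordered : \det (block_mx M U V E) = (-1) ^+ N * \det (bordered_casorati r1 r2).
  rewrite -det_natmx_rot; last by rewrite addn2.
  rewrite natmx_block; congr (\det _).
  apply: eq_natmx => k t lt_k lt_t; rewrite /rot_idx.
  have simp := (subnn, subSnn, ltnn, eqxx, gtn_eqF (ltnSn N), ltnNge, leqnSn).
  case: (ltnP k N) => ge_k; case: (ltnP t N) => ge_t //=.
  - by case: (eqN2 t ge_t lt_t) => ->; rewrite /= ?simp.
  - by case: (eqN2 k ge_k lt_k) => ->; rewrite /= ?simp.
  - by case: (eqN2 k ge_k lt_k) => ->; case: (eqN2 t ge_t lt_t) => ->; rewrite /= ?simp.
have sgn0 : (-1) ^+ N != 0 :> R by rewrite signr_eq0.
apply: (mulfI sgn0); move: (border_det_jacobi M U V E).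
rewrite bordered !col0 !col1 /=.
by rewrite mulrCA => ->; ring.
Qed.

(* Jacobi's identity with geometric border rows al^(N+1-t) and be^(N+1-t). *)
Lemma casorati_bilinear (al be : R) :
  be * window_det N 1 (sdiff al g) * window_det N 0 (sdiff be g)
  - al * window_det N 1 (sdiff be g) * window_det N 0 (sdiff al g)
  = (be - al) * window_det N 0 (sdiff be (sdiff al g)) * window_det N 1 g.
Proof.
pose geom (c : R) t := c ^+ (N.+1 - t).
have win1 (c : R) : \det (casorati_window (geom c) 1) = window_det N 1 (sdiff c g).
  by rewrite (det_geometric_row (fun i t => g i t.+1) c (leqnn N)) subnn expr0 mul1r.
have win0 (c : R) : \det (casorati_window (geom c) 0) = c * window_det N 0 (sdiff c g).
  by rewrite (det_geometric_row g c (leqnSn N)) subSnn expr1.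
have := casorati_jacobi (geom al) (geom be).
rewrite (det_geometric_rows N g al be) !win0 !win1 => J.
have -> : (be - al) * window_det N 0 (sdiff be (sdiff al g)) * window_det N 1 g =
    - (window_det N 1 g * ((al - be) * window_det N 0 (sdiff be (sdiff al g)))) by ring.
by rewrite J; ring.
Qed.

End CasoratiBilinear.

Section GramTau.
Variables (R : fieldType) (a b c : R) (N : nat).
Variables (p q : 'I_N -> R) (C : 'I_N -> 'I_N -> R).
Hypotheses (a0 : a != 0) (b0 : b != 0) (c0 : c != 0)
  (p0 : forall i, p i != 0) (q0 : forall j, q j != 0) (pq0 : forall i j, p i + q j != 0)
  (ap0 : forall i, 1 - a * p i != 0) (aq0 : forall j, 1 + a * q j != 0)
  (bp0 : forall i, 1 - b / p i != 0) (bq0 : forall j, 1 + b / q j != 0)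
  (cp0 : forall i, 1 - c * p i != 0) (cq0 : forall j, 1 + c * q j != 0).

Local Notation tau := (tau_gram a b c p q C).

Let p_sub_b0 i : p i - b != 0.
Proof.
rewrite (_ : p i - b = p i * (1 - b / p i)); last by field; rewrite p0.
by rewrite mulf_neq0.
Qed.

Let b_sub_p0 i : b - p i != 0.
Proof. by rewrite -opprB oppr_eq0. Qed.

Let binv_p0 i : 1 - b^-1 * p i != 0.
Proof.
rewrite (_ : 1 - b^-1 * p i = - (b^-1 * (p i - b))); last by field; rewrite b0.
by rewrite oppr_eq0 mulf_neq0 ?invr_eq0.
Qed.

Let q_add_b0 j : q j + b != 0.
Proof.
rewrite (_ : q j + b = q j * (1 + b / q j)); last by field; rewrite q0.
by rewrite mulf_neq0.
Qed.

Ltac nz := rewrite /=; repeat (match goal with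
  | |- is_true (_ && _) => apply/andP; split
  | |- is_true (_ * _ != 0) => apply: mulf_neq0
  | |- is_true (- _ != 0) => rewrite oppr_eq0
  | |- is_true (_^-1 != 0) => rewrite invr_eq0
  end); try done; by [apply: p0 | apply: q0 | apply: pq0 | apply: ap0 | apply: aq0
    | apply: bp0 | apply: bq0 | apply: cp0 | apply: cq0 | apply: p_sub_b0 | apply: q_add_b0
    | apply: b_sub_p0 | apply: binv_p0 | apply: b0 | apply: oner_neq0].

Section Weights.
Variables n k l m : int.

Definition gram_row_weight i :=
  (- p i) ^ n * (1 - a * p i) ^ (- k) * (1 - b / p i) ^ (- l) * (1 - c * p i) ^ m.
Definition gram_col_weight j :=
  (q j)^-1 ^ n * (1 + a * q j)^-1 ^ (- k) * (1 + b / q j)^-1 ^ (- l) * (1 + c * q j)^-1 ^ m.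

Local Notation G al be e1 e2 e3 :=
  (gram_mx p q gram_row_weight gram_col_weight C (gram_dress al be e1 e2 e3)).

Lemma tau_gram_shift (dn dk dl dm : int) :
  tau (n + dn) (k + dk) (l + dl) (m + dm) =
  \det (gram_mx p q gram_row_weight gram_col_weight C (fun P Q =>
     (- (P / Q)) ^ dn * ((1 - a * P) / (1 + a * Q)) ^ (- dk)
     * ((1 - b / P) / (1 + b / Q)) ^ (- dl) * ((1 - c * P) / (1 + c * Q)) ^ dm)).
Proof.
rewrite /tau_gram; congr (\det _); apply/matrixP => i j; rewrite !mxE !opprD.
rewrite !expfzDr; try by nz.
rewrite /gram_row_weight /gram_col_weight -[- (p i / q j)]mulNr !expfzMl.
ring.
Qed.

(* An l-shift multiplies the kernel by -(P / Q) (1 + b^-1 Q) / (1 - b^-1 P),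
   hence the compensating shift of n. *)
Lemma tau_gram_dress_b e1 e2 e3 n' l' m' :
  n' = n + e1%:Z - e2%:Z -> l' = l + e2%:Z -> m' = m - e3%:Z ->
  tau n' k l' m' = \det (G b^-1 c e1 e2 e3).
Proof.
move=> -> -> ->; rewrite -[k]addr0 -addrA tau_gram_shift /gram_dress.
congr (\det _); apply/matrixP => i j; rewrite !mxE; congr (_ + _ * (_ * _)).
rewrite expfzDr ?exprnP; try by nz.
rewrite oppr0 expr0z mulr1 -!exprz_inv -!exprnP.
rewrite -[_ * _ ^+ e2 * _ ^+ e2]mulrA -exprMn; congr (_ * _ ^+ _ * _ ^+ _).
  by field; nz.
by field; nz.
Qed.

Lemma tau_gram_dress_a e1 e2 e3 n' k' m' :
  n' = n + e1%:Z -> k' = k + e2%:Z -> m' = m - e3%:Z ->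
  tau n' k' l m' = \det (G a c e1 e2 e3).
Proof.
move=> -> -> ->; rewrite -[l]addr0 tau_gram_shift /gram_dress.
congr (\det _); apply/matrixP => i j; rewrite !mxE; congr (_ + _ * (_ * _)).
rewrite oppr0 expr0z mulr1 -!exprz_inv -!exprnP; congr (_ * _ ^+ _ * _ ^+ _).
  by field; nz.
by field; nz.
Qed.

Lemma tau_gram_bilinear_lm :
  tau n k (l + 1) m * tau n k l (m - 1)
    - b * c * tau (n + 1) k l (m - 1) * tau (n - 1) k (l + 1) m
  = (1 - b * c) * tau n k l m * tau n k (l + 1) (m - 1).
Proof.
have -> : tau n k (l + 1) m = \det (G b^-1 c 1 1 0) by apply: tau_gram_dress_b; lia.
have -> : tau n k l (m - 1) = \det (G b^-1 c 0 0 1) by apply: tau_gram_dress_b; lia.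
have -> : tau (n + 1) k l (m - 1) = \det (G b^-1 c 1 0 1) by apply: tau_gram_dress_b; lia.
have -> : tau (n - 1) k (l + 1) m = \det (G b^-1 c 0 1 0) by apply: tau_gram_dress_b; lia.
have -> : tau n k l m = \det (G b^-1 c 0 0 0) by apply: tau_gram_dress_b; lia.
have -> : tau n k (l + 1) (m - 1) = \det (G b^-1 c 1 1 1) by apply: tau_gram_dress_b; lia.
transitivity (- (b * c) * (\det (G b^-1 c 1 0 1) * \det (G b^-1 c 0 1 0)
  - b^-1 / c * \det (G b^-1 c 1 1 0) * \det (G b^-1 c 0 0 1))).
  by field; rewrite b0 c0.
rewrite (gram_bilinear _ _ _ (invr_neq0 b0) c0 pq0 q0 binv_p0 cp0).
by field; rewrite b0 c0.
Qed.

Lemma tau_gram_bilinear_km :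
  tau (n + 1) k l (m - 1) * tau n (k + 1) l m
    - a / c * tau (n + 1) (k + 1) l m * tau n k l (m - 1)
  = (1 - a / c) * tau n k l m * tau (n + 1) (k + 1) l (m - 1).
Proof.
have -> : tau (n + 1) k l (m - 1) = \det (G a c 1 0 1) by apply: tau_gram_dress_a; lia.
have -> : tau n (k + 1) l m = \det (G a c 0 1 0) by apply: tau_gram_dress_a; lia.
have -> : tau (n + 1) (k + 1) l m = \det (G a c 1 1 0) by apply: tau_gram_dress_a; lia.
have -> : tau n k l (m - 1) = \det (G a c 0 0 1) by apply: tau_gram_dress_a; lia.
have -> : tau n k l m = \det (G a c 0 0 0) by apply: tau_gram_dress_a; lia.
have -> : tau (n + 1) (k + 1) l (m - 1) = \det (G a c 1 1 1) by apply: tau_gram_dress_a; lia.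
exact: gram_bilinear _ _ _ a0 c0 pq0 q0 ap0 cp0.
Qed.

End Weights.

Lemma tau_gram_bilinear : satisfies_bilinear a b c tau.
Proof. by move=> n k l m; split; [apply: tau_gram_bilinear_lm | apply: tau_gram_bilinear_km]. Qed.

End GramTau.

Section CasoratiTau.
Variables (R : fieldType) (a b c : R) (N : nat) (i0 : 'I_N).
Variables (p q cc dd : 'I_N -> R).
Hypotheses (b0 : b != 0) (c0 : c != 0) (p0 : forall i, p i != 0) (q0 : forall i, q i != 0)
  (ap0 : forall i, 1 - a * p i != 0) (aq0 : forall i, 1 - a * q i != 0)
  (bp0 : forall i, 1 - b / p i != 0) (bq0 : forall i, 1 - b / q i != 0)
  (cp0 : forall i, 1 - c * p i != 0) (cq0 : forall i, 1 - c * q i != 0).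

Local Notation phi := (phi_cas a b c p q cc dd).
Local Notation tau := (tau_cas a b c p q cc dd).

Lemma phi_cas_k i t k l m :
  phi i t k l m = phi i t (k + 1) l m - a * phi i (t + 1) (k + 1) l m.
Proof.
rewrite /phi_cas !opprD !expfzDr ?expr1z ?exprN1 ?p0 ?q0 ?ap0 ?aq0 //.
by field; rewrite ap0 aq0.
Qed.

Lemma phi_cas_m i t k l m :
  phi i t k l m = phi i t k l (m - 1) - c * phi i (t + 1) k l (m - 1).
Proof.
rewrite /phi_cas !expfzDr ?expr1z ?exprN1 ?p0 ?q0 ?cp0 ?cq0 //.
by field; rewrite cp0 cq0.
Qed.

Lemma phi_cas_l i t k l m :
  phi i t k l m = phi i t k (l + 1) m - b * phi i (t - 1) k (l + 1) m.
Proof.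
have pb0 : p i - b != 0.
  by rewrite (_ : p i - b = p i * (1 - b / p i)) ?mulf_neq0 //; field; rewrite p0.
have qb0 : q i - b != 0.
  by rewrite (_ : q i - b = q i * (1 - b / q i)) ?mulf_neq0 //; field; rewrite q0.
rewrite /phi_cas !opprD !expfzDr ?expr1z ?exprN1 ?p0 ?q0 ?bp0 ?bq0 //.
by field; rewrite pb0 qb0 p0 q0.
Qed.

(* Rows of the Casorati matrix as nat-indexed sequences; rows beyond N are
   junk copies of row i0 and never enter a determinant. *)
Definition phi_seq n0 k l m i t := phi (insubd i0 i) (n0 + t%:Z) k l m.

Lemma tau_cas_window n0 s n k l m :
  n = n0 + s%:Z -> tau n k l m = window_det N s (phi_seq n0 k l m).
Proof.
move=> ->; congr (\det _); apply/matrixP => i j; rewrite !mxE /phi_seq valKd.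
by congr (phi _ _ k l m); lia.
Qed.

Lemma phi_seq_k n0 k l m i t :
  phi_seq n0 k l m i t = sdiff a (phi_seq n0 (k + 1) l m) i t.
Proof. by rewrite /sdiff /phi_seq phi_cas_k; congr (_ - a * phi _ _ _ _ _); lia. Qed.

Lemma phi_seq_m n0 k l m i t :
  phi_seq n0 k l m i t = sdiff c (phi_seq n0 k l (m - 1)) i t.
Proof. by rewrite /sdiff /phi_seq phi_cas_m; congr (_ - c * phi _ _ _ _ _); lia. Qed.

Lemma phi_seq_l n0 k l m i t :
  phi_seq (n0 + 1) k l m i t = - b * sdiff b^-1 (phi_seq n0 k (l + 1) m) i t.
Proof.
rewrite /sdiff /phi_seq phi_cas_l.
have -> : n0 + 1 + t%:Z - 1 = n0 + t%:Z by ring.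
have -> : n0 + 1 + t%:Z = n0 + t.+1%:Z by lia.
by field.
Qed.

Section Shifts.
Variables n k l m : int.

Lemma tau_cas_bilinear_lm :
  tau n k (l + 1) m * tau n k l (m - 1)
    - b * c * tau (n + 1) k l (m - 1) * tau (n - 1) k (l + 1) m
  = (1 - b * c) * tau n k l m * tau n k (l + 1) (m - 1).
Proof.
pose g := phi_seq (n - 1) k (l + 1) (m - 1).
have -> : tau n k (l + 1) m = window_det N 1 (sdiff c g).
  by rewrite (@tau_cas_window (n - 1) 1); [apply: eq_window_det => i t; apply: phi_seq_m | lia].
have -> : tau n k l (m - 1) = (- b) ^+ N * window_det N 0 (sdiff b^-1 g).
  rewrite -window_detZ (@tau_cas_window (n - 1 + 1) 0); last by lia.
  by apply: eq_window_det => i t; apply: phi_seq_l.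
have -> : tau (n + 1) k l (m - 1) = (- b) ^+ N * window_det N 1 (sdiff b^-1 g).
  rewrite -window_detZ (@tau_cas_window (n - 1 + 1) 1); last by lia.
  by apply: eq_window_det => i t; apply: phi_seq_l.
have -> : tau (n - 1) k (l + 1) m = window_det N 0 (sdiff c g).
  by rewrite (@tau_cas_window (n - 1) 0); [apply: eq_window_det => i t; apply: phi_seq_m | lia].
have -> : tau n k l m = (- b) ^+ N * window_det N 0 (sdiff c (sdiff b^-1 g)).
  rewrite -window_detZ (@tau_cas_window (n - 1 + 1) 0); last by lia.
  apply: eq_window_det => i t; rewrite phi_seq_l /sdiff.
  by rewrite !(phi_seq_m (n - 1) k (l + 1) m) /sdiff /g; ring.
have -> : tau n k (l + 1) (m - 1) = window_det N 1 g by apply: tau_cas_window; lia.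
transitivity ((- b) ^+ N * (- b)
  * (c * window_det N 1 (sdiff b^-1 g) * window_det N 0 (sdiff c g)
     - b^-1 * window_det N 1 (sdiff c g) * window_det N 0 (sdiff b^-1 g))).
  by field.
by rewrite casorati_bilinear; field.
Qed.

Lemma tau_cas_bilinear_km :
  tau (n + 1) k l (m - 1) * tau n (k + 1) l m
    - a / c * tau (n + 1) (k + 1) l m * tau n k l (m - 1)
  = (1 - a / c) * tau n k l m * tau (n + 1) (k + 1) l (m - 1).
Proof.
pose g := phi_seq n (k + 1) l (m - 1).
have -> : tau (n + 1) k l (m - 1) = window_det N 1 (sdiff a g).
  by rewrite (@tau_cas_window n 1); [apply: eq_window_det => i t; apply: phi_seq_k | lia].
have -> : tau n (k + 1) l m = window_det N 0 (sdiff c g).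
  by rewrite (@tau_cas_window n 0); [apply: eq_window_det => i t; apply: phi_seq_m | lia].
have -> : tau (n + 1) (k + 1) l m = window_det N 1 (sdiff c g).
  by rewrite (@tau_cas_window n 1); [apply: eq_window_det => i t; apply: phi_seq_m | lia].
have -> : tau n k l (m - 1) = window_det N 0 (sdiff a g).
  by rewrite (@tau_cas_window n 0); [apply: eq_window_det => i t; apply: phi_seq_k | lia].
have -> : tau n k l m = window_det N 0 (sdiff c (sdiff a g)).
  rewrite (@tau_cas_window n 0); last by lia.
  apply: eq_window_det => i t; rewrite phi_seq_k /sdiff.
  by rewrite !(phi_seq_m n (k + 1) l m) /sdiff /g; ring.
have -> : tau (n + 1) (k + 1) l (m - 1) = window_det N 1 g by apply: tau_cas_window; lia.
transitivity (c^-1 * (c * window_det N 1 (sdiff a g) * window_det N 0 (sdiff c g)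
  - a * window_det N 1 (sdiff c g) * window_det N 0 (sdiff a g))).
  by field.
by rewrite casorati_bilinear; field.
Qed.

End Shifts.

Lemma tau_cas_bilinear : satisfies_bilinear a b c tau.
Proof. by move=> n k l m; split; [apply: tau_cas_bilinear_lm | apply: tau_cas_bilinear_km]. Qed.

End CasoratiTau.

Unset Implicit Arguments.

Theorem proposition1 (R : fieldType) (a b c : R) (N : nat) :
  a != 0 -> b != 0 -> c != 0 -> (0 < N)%N ->
  (forall (p q : 'I_N -> R) (C : 'I_N -> 'I_N -> R),
     (forall i, p i != 0) -> (forall j, q j != 0) ->
     (forall i j, p i + q j != 0) ->
     (forall i, 1 - a * p i != 0) -> (forall j, 1 + a * q j != 0) ->
     (forall i, 1 - b / p i != 0) -> (forall j, 1 + b / q j != 0) ->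
     (forall i, 1 - c * p i != 0) -> (forall j, 1 + c * q j != 0) ->
     satisfies_bilinear a b c (tau_gram a b c p q C))
  /\
  (forall (p q cc dd : 'I_N -> R),
     (forall i, p i != 0) -> (forall i, q i != 0) ->
     (forall i, 1 - a * p i != 0) -> (forall i, 1 - a * q i != 0) ->
     (forall i, 1 - b / p i != 0) -> (forall i, 1 - b / q i != 0) ->
     (forall i, 1 - c * p i != 0) -> (forall i, 1 - c * q i != 0) ->
     satisfies_bilinear a b c (tau_cas a b c p q cc dd)).
Proof.
move=> a0 b0 c0 N_gt0; split=> [p q C | p q cc dd] *.
  exact: tau_gram_bilinear.
exact: (tau_cas_bilinear (Ordinal N_gt0)).
Qed.
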